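(* Let $n\geqslant2$, $i_0,j_0\in\{0,\dots,n\}$, $x_{i_0},y_{j_0}\in\mathbf{Z}$, $\boldsymbol{c}\in\mathbf{Z}^{n+1}$ and $q\geqslant1$. For $(a_i)_{i\neq i_0},(a'_j)_{j\neq j_0}\in(\mathbf{Z}/q\mathbf{Z})^n$ let $\boldsymbol{a}\in(\mathbf{Z}/q\mathbf{Z})^{n+1}$ have coordinates $a_i$ ($i\neq i_0$) and $x_{i_0}\bmod q$ at $i_0$, and $\boldsymbol{a}'$ have coordinates $a'_j$ ($j\neq j_0$) and $y_{j_0}\bmod q$ at $j_0$. Then for every $\eta>0$, \[\sum_{\substack{(a_i)_{i\neq i_0}\in(\mathbf{Z}/q\mathbf{Z})^n\\(a'_j)_{j\neq j_0}\in(\mathbf{Z}/q\mathbf{Z})^n}}|S_q(\boldsymbol{a},\boldsymbol{a}')(\boldsymbol{c})|\ll q^{3+2n+\eta},\] the implied constant depending only on $n$ and $\eta$.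
   Context: $e_q(x)=\exp(2i\pi x/q)$ and $S_q(\boldsymbol{a},\boldsymbol{a}')(\boldsymbol{c})=\sum_{d\in(\mathbf{Z}/q\mathbf{Z})^*}\sum_{\boldsymbol{b}\in(\mathbf{Z}/q\mathbf{Z})^{n+1}}e_q\big(d\sum_ka_ka'_kb_k+\boldsymbol{c}.\boldsymbol{b}\big)$. *)

From mathcomp Require Import all_boot all_order all_algebra.
From mathcomp Require Import all_classical all_reals all_analysis.
From mathcomp Require Import complex.
Set Implicit Arguments. Unset Strict Implicit. Unset Printing Implicit Defensive.
Import Order.TTheory GRing.Theory Num.Theory.
Local Open Scope ring_scope.
Local Open Scope complex_scope.

(* e_q(k) = exp(2 i pi k / q) = cos(2 pi k / q) + i sin(2 pi k / q),
   for an integer k (it only depends on k mod q). *)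
Definition e_q (R : realType) (q : nat) (k : int) : R[i] :=
  let t : R := (2 * pi * k%:~R / q%:R)%R in (cos t +i* sin t).

(* Residues mod q are represented by 'I_q (values 0..q-1).
   S_q(a,a')(c) = sum_{d in (Z/qZ)^*} sum_{b in (Z/qZ)^(n+1)}
                    e_q(d * sum_k a_k a'_k b_k + c.b).
   (Z/qZ)^* is the set of residues d with gcd(d,q) = 1 (for q = 1 this is {0}). *)
Definition S_q (R : realType) (n q : nat) (a a' : {ffun 'I_n.+1 -> 'I_q})
    (c : 'I_n.+1 -> int) : R[i] :=
  \sum_(d < q | coprime d q)
    \sum_(b : {ffun 'I_n.+1 -> 'I_q})
      e_q R q ((d%:Z * \sum_(k < n.+1) (a k)%:Z * (a' k)%:Z * (b k)%:Z
               + \sum_(k < n.+1) c k * (b k)%:Z)%R).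

(* The sum over (a_i)_{i <> i0} and (a'_j)_{j <> j0} in (Z/qZ)^n of
   |S_q(a,a')(c)|, where a has coordinate x mod q at i0 and a' has
   coordinate y mod q at j0: equivalently, a sum over full vectors a, a'
   in (Z/qZ)^(n+1) whose i0 (resp. j0) coordinate is fixed. *)
Definition sum_abs_S (R : realType) (n q : nat) (i0 j0 : 'I_n.+1) (x y : int)
    (c : 'I_n.+1 -> int) : R :=
  (\sum_(a : {ffun 'I_n.+1 -> 'I_q} | (a i0)%:Z == (x %% q%:Z)%Z)
     \sum_(a' : {ffun 'I_n.+1 -> 'I_q} | (a' j0)%:Z == (y %% q%:Z)%Z)
       complex.Re `|S_q R a a' c|)%R.

From mathcomp Require Import all_boot all_order all_algebra.
From mathcomp Require Import all_classical all_reals all_analysis.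
From mathcomp Require Import complex.
From mathcomp Require Import zify ring lra.
Import Order.TTheory GRing.Theory Num.Theory.
Set Implicit Arguments. Unset Strict Implicit. Unset Printing Implicit Defensive.

(* Orthogonality of the additive characters turns [S_q(a, a')(c)] into the nonnegative
   integer [\sum_d \prod_k q [q | d a_k a'_k + c_k]].  Summed over [a] and [a'] the
   product factors over the coordinates: coordinate [k] contributes the number of pairs
   [(u, v)] with [q | d u v + c_k], which is at most [\sum_u gcd(u, q) <= q tau(q)], and at
   most [q] (resp. [1]) when one (resp. both) of [u], [v] is fixed.  This bounds the sum
   by [q^(2n+3) tau(q)^(n-1)], and the divisor bound [tau(q) << q^eta] concludes. *)

Lemma card_le_inj_ltn (T : finType) (P : pred T) (f : T -> nat) (b : nat) :
  {in P &, injective f} -> (forall x, P x -> f x < b) -> #|P| <= b.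
Proof.
move=> finj fb; case: b fb => [|b] fb.
  case: (pickP P) => [x Px|P0]; first by have := fb x Px.
  by rewrite eq_card0.
pose g (x : T) : 'I_b.+1 := inord (f x).
have ginj : {in P &, injective g}.
  move=> x y Px Py /(congr1 val); rewrite /= !inordK ?fb //; exact: finj.
by rewrite -(card_in_imset ginj); apply: leq_trans (max_card _) _; rewrite card_ord.
Qed.

Lemma sum_nat_pred (T : finType) (P : pred T) : \sum_(i : T) (P i : nat) = #|P|.
Proof.
by rewrite -sum1_card [in RHS]big_mkcond; apply: eq_bigr => i _; rewrite unfold_in; case: (P i).
Qed.

Lemma leq_sum_cond (T : finType) (P : pred T) (F : T -> nat) :
  \sum_(i | P i) F i <= \sum_i F i.
Proof. exact: (@sub_le_big _ addn leq leqnn (fun x y => leq_addr y x)). Qed.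

Lemma leq_prod_const (I : finType) (P : pred I) (F : I -> nat) (b : nat) :
  (forall i, F i <= b) -> \prod_(i | P i) F i <= b ^ #|P|.
Proof. by move=> Fb; rewrite -prod_nat_const; apply: leq_prod => i _. Qed.

Definition ndivisors (q : nat) := #|[pred d : 'I_q | d.+1 %| q]|.

Lemma ndivisors_le q : ndivisors q <= q.
Proof. by rewrite /ndivisors -[X in _ <= X]card_ord max_card. Qed.

Lemma ndivisors1 : ndivisors 1 = 1.
Proof.
by rewrite /ndivisors (eq_card (B := 'I_1)) ?card_ord // => d; rewrite !inE dvdn1 (ord1 d).
Qed.

Lemma leq_expS_exp2 e k : 0 < k -> e.+1 ^ k <= k ^ k * 2 ^ e.
Proof.
move=> k0; set t := e %/ k.
have e1 : e.+1 <= k * t.+1.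
  have := divn_eq e k; have := ltn_pmod e k0; rewrite -/t; nia.
have h1 : t.+1 ^ k <= 2 ^ e.
  apply: (@leq_trans ((2 ^ t) ^ k)); first by rewrite leq_exp2r // ltn_expl.
  rewrite -expnM; apply: leq_pexp2l => //.
  have := divn_eq e k; rewrite -/t; nia.
apply: (@leq_trans ((k * t.+1) ^ k)); first by rewrite leq_exp2r.
by rewrite expnMn leq_mul2l h1 orbT.
Qed.

(* Only the primes below [2 ^ k] can make [(e + 1) ^ k] exceed [p ^ e]. *)
Lemma pfactor_expS_le p e k : prime p -> 0 < k ->
  e.+1 ^ k <= (k ^ k) ^ (p < 2 ^ k) * p ^ e.
Proof.
move=> pp k0; case: (ltnP p (2 ^ k)) => pk /=; rewrite ?expn1 ?expn0 ?mul1n.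
  apply: leq_trans (leq_expS_exp2 e k0) _.
  by rewrite leq_mul2l; case: e => [|e]; rewrite ?orbT // leq_exp2r // prime_gt1 ?orbT.
apply: (@leq_trans ((2 ^ e) ^ k)); first by rewrite leq_exp2r // ltn_expl.
by rewrite -expnM mulnC expnM; case: e => [|e] //; rewrite leq_exp2r.
Qed.

Definition small_prime_divisors k q := [pred p : 'I_(2 ^ k) | prime p && (p %| q)].

Lemma card_small_prime_divisors_pfactor k p e m : prime p -> coprime p m -> 0 < e ->
  #|small_prime_divisors k m| + (p < 2 ^ k)
    <= #|small_prime_divisors k (m * p ^ e)|.
Proof.
move=> pp cpm e0.
have sub : small_prime_divisors k m \subset small_prime_divisors k (m * p ^ e).
  by apply/fintype.subsetP => r; rewrite !inE => /andP[-> rm]; rewrite dvdn_mulr.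
case: ltnP => pk; last by rewrite addn0 subset_leq_card.
rewrite addn1; apply: proper_card; apply/properP; split=> //.
exists (Ordinal pk); rewrite !inE /= pp ?dvdn_mull ?dvdn_exp //=.
by rewrite -prime_coprime.
Qed.

(* A divisor [d] of [q] is determined by [logn p d <= logn p q] and the divisor
   [d %/ p ^ logn p d] of [m]. *)
Lemma ndivisors_pfactor_le p q m : prime p -> 0 < q -> coprime p m ->
  q = m * p ^ logn p q -> ndivisors q <= (logn p q).+1 * ndivisors m.
Proof.
move=> pp q0 cpm qE; set e := logn p q.
have m0 : 0 < m by move: q0; rewrite qE muln_gt0 => /andP[].
pose l (d : 'I_q) := logn p d.+1.
pose r (d : 'I_q) := d.+1 %/ p ^ l d.
have dE (d : 'I_q) : d.+1 = r d * p ^ l d by rewrite divnK // pfactor_dvdnn.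
have div_q (d : 'I_q) : d.+1 %| q -> [/\ l d <= e, 0 < r d & r d %| m].
  move=> dq; have r0 : 0 < r d by move: (ltn0Sn d); rewrite dE muln_gt0 => /andP[].
  split=> //; first exact: dvdn_leq_log.
  have [s cs sE] := pfactor_coprime pp (ltn0Sn d).
  have -> : r d = s by rewrite /r /l {1}sE mulnK ?expn_gt0 ?prime_gt0.
  have : s %| q by rewrite (dvdn_trans _ dq) // {1}sE dvdn_mulr.
  by rewrite qE Gauss_dvdl // coprimeXr // coprime_sym.
case: m m0 cpm qE div_q => // m' _ _ _ div_q.
have rle (d : 'I_q) : 0 < r d -> r d %| m'.+1 -> (r d).-1 < m'.+1.
  by move=> r0 rm; rewrite prednK // dvdn_leq.
pose g (d : 'I_q) : 'I_e.+1 * 'I_m'.+1 := (inord (l d), inord (r d).-1).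
have ginj : {in [pred d : 'I_q | d.+1 %| q] &, injective g}.
  move=> d1 d2 /div_q[l1 r10 r1m] /div_q[l2 r20 r2m] [/(congr1 val) E1 /(congr1 val) E2].
  move: E1 E2; rewrite /= (inordK (rle _ r10 r1m)) (inordK (rle _ r20 r2m)).
  rewrite !inordK ?ltnS // => E1 E2.
  by apply: val_inj; apply: succn_inj; rewrite dE (dE d2) E1 -(prednK r10) E2 prednK.
rewrite /ndivisors -(card_in_imset ginj).
apply: (@leq_trans #|finset.setX [set: 'I_e.+1] [set d : 'I_m'.+1 | d.+1 %| m'.+1]|).
  apply: subset_leq_card; apply/fintype.subsetP => z /imsetP [d /div_q[ld r0 rm] ->].
  by rewrite !inE /= (inordK (rle _ r0 rm)) prednK // inordK.
by rewrite cardsX cardsT card_ord cardsE.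
Qed.

Lemma ndivisors_exp_le k q : 0 < k -> 0 < q ->
  ndivisors q ^ k <= (k ^ k) ^ #|small_prime_divisors k q| * q.
Proof.
move=> k0; elim/ltn_ind: q => q IH q0.
have [q_le1|q_gt1] := leqP q 1.
  have -> : q = 1 by lia.
  by rewrite ndivisors1 exp1n muln1 expn_gt0 expn_gt0 k0.
set p := pdiv q; have pp : prime p := pdiv_prime q_gt1.
have [m cpm qE] := pfactor_coprime pp q0; set e := logn p q in qE.
have e0 : 0 < e by rewrite logn_gt0 mem_primes pp q0 pdiv_dvd.
have m0 : 0 < m by move: q0; rewrite qE muln_gt0 => /andP[].
have mq : m < q.
  by rewrite qE -{1}(muln1 m) ltn_pmul2l // -(expn0 p) ltn_exp2l ?prime_gt1.
apply: (@leq_trans ((e.+1 * ndivisors m) ^ k)).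
  by rewrite leq_exp2r // ndivisors_pfactor_le.
rewrite expnMn; apply: (@leq_trans ((k ^ k) ^ (p < 2 ^ k) * p ^ e *
                                     ((k ^ k) ^ #|small_prime_divisors k m| * m))).
  by apply: leq_mul; [exact: pfactor_expS_le | exact: IH].
have -> : (k ^ k) ^ (p < 2 ^ k) * p ^ e * ((k ^ k) ^ #|small_prime_divisors k m| * m)
    = (k ^ k) ^ (#|small_prime_divisors k m| + (p < 2 ^ k)) * q.
  by rewrite qE expnD; ring.
rewrite leq_mul2r leq_pexp2l ?orbT ?expn_gt0 ?k0 //.
by rewrite [in X in _ <= X]qE card_small_prime_divisors_pfactor.
Qed.

Lemma ndivisors_exp_bound k q : 0 < k -> 0 < q ->
  ndivisors q ^ k <= (k ^ k) ^ (2 ^ k) * q.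
Proof.
move=> k0 q0; apply: leq_trans (ndivisors_exp_le k0 q0) _.
rewrite leq_mul2r leq_pexp2l ?orbT ?expn_gt0 ?k0 //.
by rewrite -[X in _ <= X]card_ord max_card.
Qed.

Section LinearCongruence.
Local Open Scope ring_scope.

(* Two solutions differ by a multiple of [q %/ gcdn `|A| q], so a solution is
   determined by its quotient by that number. *)
Lemma card_lin_congr_le (q : nat) (A c : int) : (0 < q)%N ->
  (#|[pred v : 'I_q | (q%:Z %| (A * v%:Z + c)%R)%Z]| <= gcdn `|A|%N q)%N.
Proof.
move=> q0; set g := gcdn `|A|%N q; set q' := (q %/ g)%N.
have g0 : (0 < g)%N by rewrite gcdn_gt0 q0 orbT.
have qE : q = (q' * g)%N by rewrite divnK // dvdn_gcdr.
have q'0 : (0 < q')%N by move: q0; rewrite qE muln_gt0 => /andP[].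
apply: (@card_le_inj_ltn _ _ (fun v : 'I_q => v %/ q')%N); last first.
  by move=> v _; rewrite ltn_divLR // mulnC -qE.
move=> v1 v2; rewrite !inE => H1 H2 E.
have dvd_diff : (q %| `|A|%N * `|v1%:Z - v2%:Z|%N)%N.
  have : (q%:Z %| A * (v1%:Z - v2%:Z))%Z.
    have -> : A * (v1%:Z - v2%:Z) = (A * v1%:Z + c) - (A * v2%:Z + c) by ring.
    exact: rpredB.
  by rewrite dvdzE abszM.
have dvd_q' : (q' %| `|v1%:Z - v2%:Z|%N)%N.
  have : (q %| gcdn (`|A|%N * `|v1%:Z - v2%:Z|%N) (q * `|v1%:Z - v2%:Z|%N))%N.
    by rewrite dvdn_gcd dvd_diff dvdn_mulr.
  by rewrite -muln_gcdl -/g {1}qE mulnC dvdn_pmul2l.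
have mod_eq : (v1 %% q' = v2 %% q')%N.
  have : (v1%:Z == v2%:Z %[mod q'%:Z])%Z by rewrite eqz_mod_dvd dvdzE.
  by rewrite !modz_nat => /eqP [].
by apply: val_inj; rewrite /= (divn_eq v1 q') (divn_eq v2 q') E mod_eq.
Qed.

End LinearCongruence.

(* [gcdn u q] is at most the sum of the common divisors of [u] and [q], and a divisor
   [D] of [q] divides exactly [q %/ D] of the [u < q]. *)
Lemma sum_gcdn_le q : 0 < q -> \sum_(u < q) gcdn u q <= q * ndivisors q.
Proof.
move=> q0.
apply: (@leq_trans (\sum_(u < q) \sum_(D < q) ((D.+1 %| q) && (D.+1 %| u)) * D.+1)).
  apply: leq_sum => u _; set g := gcdn u q.
  have g0 : 0 < g by rewrite gcdn_gt0 q0 orbT.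
  have gq : g.-1 < q by rewrite prednK // dvdn_leq // dvdn_gcdr.
  rewrite (bigD1 (Ordinal gq)) //= prednK // dvdn_gcdr dvdn_gcdl mul1n.
  exact: leq_addr.
rewrite exchange_big /= /ndivisors -sum_nat_pred big_distrr /=.
apply: leq_sum => D _.
case: (boolP (D.+1 %| q)) => Dq /=; last by rewrite big1 // => u _; rewrite mul0n.
rewrite muln1 -big_distrl /= sum_nat_pred mulnC.
have qE : q = q %/ D.+1 * D.+1 by rewrite divnK.
rewrite [X in _ <= X]qE [X in _ <= X]mulnC leq_mul2l /=.
apply: (@card_le_inj_ltn _ _ (fun u : 'I_q => u %/ D.+1)).
  by move=> u1 u2 h1 h2 E; apply: val_inj; rewrite /= -(divnK h1) E divnK.
by move=> u _; rewrite ltn_divLR // -qE.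
Qed.

Section FixedCoordinate.
Variables (I T : finType).

Definition constrained_at (i0 k : I) (P : pred T) : pred T :=
  [pred u | (k != i0) || P u].

Lemma family_constrained_at (i0 : I) (P : pred T) (a : {ffun I -> T}) :
  (a \in family (fun k => constrained_at i0 k P)) = P (a i0).
Proof.
apply/familyP/idP => [/(_ i0)|Pa k]; first by rewrite inE eqxx.
by rewrite inE; case: eqP => // ->.
Qed.

Lemma card_constrained_at (i0 : I) (P : pred T) : #|constrained_at i0 i0 P| = #|P|.
Proof. by apply: eq_card => u; rewrite !inE eqxx. Qed.

Lemma sum_ffun_constrained_prod (i0 j0 : I) (P Q : pred T) (F : I -> T -> T -> nat) :
  \sum_(a : {ffun I -> T} | P (a i0)) \sum_(a' : {ffun I -> T} | Q (a' j0))
      \prod_k F k (a k) (a' k)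
  = \prod_k \sum_(u in constrained_at i0 k P) \sum_(v in constrained_at j0 k Q) F k u v.
Proof.
rewrite (bigA_distr_big_dep _ (fun k u => \sum_(v in constrained_at j0 k Q) F k u v)).
apply: eq_big => [a|a _]; first by rewrite family_constrained_at.
rewrite (bigA_distr_big_dep _ (fun k v => F k (a k) v)).
by apply: eq_bigl => a'; rewrite family_constrained_at.
Qed.

End FixedCoordinate.

Section CongruencePairs.
Local Open Scope ring_scope.

Definition congr_pairs (q d : nat) (c : int) (A B : pred 'I_q) : nat :=
  \sum_(u in A) \sum_(v in B) (q%:Z %| (d%:Z * u%:Z * v%:Z + c)%R)%Z.

Lemma congr_pairs_le_card (q d : nat) (c : int) (A B : pred 'I_q) :
  (congr_pairs d c A B <= #|A| * #|B|)%N.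
Proof.
rewrite -sum1_card big_distrl /=; apply: leq_sum => u _.
by rewrite mul1n -sum1_card; apply: leq_sum => v _; apply: leq_b1.
Qed.

Lemma congr_pairs_le_ndivisors (q d : nat) (c : int) (A B : pred 'I_q) :
  (0 < q)%N -> coprime d q -> (congr_pairs d c A B <= q * ndivisors q)%N.
Proof.
move=> q0 cdq; apply: leq_trans (sum_gcdn_le q0).
apply: leq_trans (leq_sum_cond _ _) _; apply: leq_sum => u _.
apply: (@leq_trans #|[pred v : 'I_q | (q%:Z %| (d%:Z * u%:Z * v%:Z + c)%R)%Z]|).
  by rewrite -sum_nat_pred leq_sum_cond.
apply: leq_trans (card_lin_congr_le (d%:Z * u%:Z) c q0) _.
by rewrite abszM !absz_nat gcdnC Gauss_gcdr 1?gcdnC // coprime_sym.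
Qed.

End CongruencePairs.

Lemma prod_le_two_exceptions n (i0 j0 : 'I_n.+1) (S : 'I_n.+1 -> nat) q t :
  0 < n -> t <= q -> (forall k, S k <= q * t) -> S i0 <= q -> S j0 <= q ->
  (i0 = j0 -> S i0 <= 1) -> \prod_k S k <= q ^ n.+1 * t ^ n.-1.
Proof.
move=> n0 tq Sk Si0 Sj0 Sij; rewrite (bigD1 i0) //=.
have card_i0 : #|[pred k : 'I_n.+1 | k != i0]| = n by rewrite cardC1 card_ord.
have [eij|nij] := eqVneq i0 j0.
  apply: (@leq_trans (1 * (q * t) ^ n)).
    apply: leq_mul; first exact: Sij.
    by apply: leq_trans (leq_prod_const _ Sk) _; rewrite card_i0.
  rewrite mul1n -(prednK n0) expnMn !expnS /=; set m := n.-1.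
  have -> : q * q ^ m * (t * t ^ m) = q * q ^ m * t ^ m * t by ring.
  have -> : q * (q * q ^ m) * t ^ m = q * q ^ m * t ^ m * q by ring.
  by rewrite leq_mul2l tq orbT.
rewrite (bigD1 j0) /=; last by rewrite eq_sym.
have card_i0j0 : #|[pred k : 'I_n.+1 | (k != i0) && (k != j0)]| = n.-1.
  rewrite -[in RHS]card_i0 (cardD1 j0 [pred k : 'I_n.+1 | k != i0]) inE eq_sym nij /=.
  by apply: eq_card => k; rewrite !inE andbC.
apply: (@leq_trans (q * (q * (q * t) ^ n.-1))).
  rewrite !leq_mul //; apply: leq_trans (leq_prod_const _ Sk) _.
  by rewrite card_i0j0.
by apply: eq_leq; rewrite -[in RHS](prednK n0) expnMn !expnS /=; ring.
Qed.

Section CountingBound.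
Local Open Scope ring_scope.

Lemma sum_fixed_coords_congr_le n q (i0 j0 : 'I_n.+1) (P Q : pred 'I_q)
    (c : 'I_n.+1 -> int) :
  (0 < n)%N -> (0 < q)%N -> (#|P| <= 1)%N -> (#|Q| <= 1)%N ->
  (\sum_(a : {ffun 'I_n.+1 -> 'I_q} | P (a i0))
     \sum_(a' : {ffun 'I_n.+1 -> 'I_q} | Q (a' j0))
       \sum_(d < q | coprime d q) \prod_(k < n.+1)
         (q * (q%:Z %| (d%:Z * (a k)%:Z * (a' k)%:Z + c k)%R)%Z)
   <= q ^ (3 + 2 * n) * ndivisors q ^ n.-1)%N.
Proof.
move=> n0 q0 P1 Q1.
under eq_bigr do rewrite exchange_big /=.
rewrite exchange_big /=.
apply: (@leq_trans (\sum_(d < q | coprime d q) q ^ n.+1 * (q ^ n.+1 * ndivisors q ^ n.-1))).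
  apply: leq_sum => d cdq.
  under eq_bigr do under eq_bigr do rewrite big_split /= prod_nat_const card_ord.
  under eq_bigr do rewrite -big_distrr /=.
  rewrite -big_distrr /= leq_mul2l; apply/orP; right.
  rewrite (sum_ffun_constrained_prod i0 j0 P Q
    (fun k u v => (q%:Z %| (d%:Z * u%:Z * v%:Z + c k)%R)%Z : nat)).
  have side_le (A B : pred 'I_q) : (#|A| <= 1)%N -> (#|A| * #|B| <= q)%N.
    by move=> A1; apply: leq_trans (leq_mul A1 (max_card B)) _; rewrite mul1n card_ord.
  apply: (@prod_le_two_exceptions _ i0 j0
    (fun k => congr_pairs d (c k) (constrained_at i0 k P) (constrained_at j0 k Q))).
  - exact: n0.
  - exact: ndivisors_le.
  - by move=> k; apply: congr_pairs_le_ndivisors.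
  - by apply: leq_trans (congr_pairs_le_card _ _ _ _) _; rewrite card_constrained_at side_le.
  - apply: leq_trans (congr_pairs_le_card _ _ _ _) _.
    by rewrite mulnC card_constrained_at side_le.
  - move=> <-; apply: leq_trans (congr_pairs_le_card _ _ _ _) _.
    by rewrite !card_constrained_at -[1%N]muln1 leq_mul.
apply: leq_trans (leq_sum_cond _ _) _.
rewrite sum_nat_const card_ord.
have -> : (q ^ (3 + 2 * n) = q * q ^ n.+1 * q ^ n.+1)%N.
  by rewrite -expnS -expnD; congr (expn _ _); lia.
by rewrite !mulnA.
Qed.

End CountingBound.

Local Open Scope ring_scope.

Section AdditiveCharacter.
Local Open Scope complex_scope.
Variables (R : realType) (q : nat).
Hypothesis q0 : (0 < q)%N.

Lemma e_qD (a b : int) : e_q R q (a + b) = e_q R q a * e_q R q b.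
Proof.
rewrite /e_q intrD mulrDr mulrDl cosD sinD.
by apply/eqP; rewrite eq_complex /= eqxx addrC eqxx.
Qed.

Lemma e_q0 : e_q R q 0 = 1.
Proof. by rewrite /e_q mulr0 mul0r cos0 sin0. Qed.

Lemma e_qMn (m : int) (b : nat) : e_q R q (m * b%:Z) = e_q R q m ^+ b.
Proof.
elim: b => [|b IH]; first by rewrite mulr0 e_q0 expr0.
by rewrite -addn1 PoszD mulrDr e_qD IH mulr1 exprD expr1.
Qed.

Lemma e_q_mulq (z : int) : e_q R q (z * q%:Z) = 1.
Proof.
have e_qq : e_q R q q%:Z = 1.
  rewrite /e_q (_ : 2 * pi * (q%:Z)%:~R / q%:R = pi *+ 2) ?cos2pi ?sin2pi //.
  by rewrite -mulrA pmulrn mulfV ?pnatr_eq0 -?lt0n // mulr1 mulrC mulr_natr.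
have e_qnq (m : nat) : e_q R q (m%:Z * q%:Z) = 1 by rewrite mulrC e_qMn e_qq expr1n.
case: z => [m|m]; first exact: e_qnq.
have := e_qD (Negz m * q%:Z) (m.+1%:Z * q%:Z).
by rewrite -mulrDl NegzE addNr mul0r e_q0 e_qnq mulr1 => <-.
Qed.

Lemma e_q_eq1 (m : int) : e_q R q m = 1 -> (q%:Z %| m)%Z.
Proof.
rewrite {1}(divz_eq m q%:Z) e_qD e_q_mulq mul1r.
set r := (m %% q%:Z)%Z => er1; apply/dvdz_mod0P; rewrite -/r.
have r_ge0 : 0 <= r by apply: modz_ge0; rewrite eqz_nat -lt0n.
have r_ltq : r < q%:Z by apply: ltz_pmod; rewrite ltz_nat.
apply/eqP; rewrite eq_le r_ge0 andbT; apply/negP => /negP; rewrite -ltNge => r_gt0.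
have qR : (0 : R) < q%:R by rewrite ltr0n.
set s : R := pi * r%:~R / q%:R.
have s_gt0 : 0 < s by rewrite divr_gt0 // mulr_gt0 ?pi_gt0 // ltr0z.
have s_ltpi : s < pi.
  rewrite ltr_pdivrMr // ltr_pM2l ?pi_gt0 //.
  by rewrite (_ : q%:R = (q%:Z)%:~R :> R) // ltr_int.
have sin_gt0 : 0 < sin s by apply: sin_gt0_pi; rewrite s_gt0 s_ltpi.
(* [Re e_q(r) = cos (2 s) = 1 - 2 sin s ^ 2 < 1]. *)
have : complex.Re (e_q R q r) = 1 by rewrite er1.
rewrite /e_q /= (_ : 2 * pi * r%:~R / q%:R = s + s); last by rewrite /s; ring.
rewrite cosD => cos2s; have := cos2Dsin2 s; rewrite !expr2 => pyth.
have : sin s * sin s > 0 by apply: mulr_gt0.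
lra.
Qed.

Lemma sum_e_q_pow (m : int) :
  \sum_(j < q) e_q R q m ^+ j = (q * (q%:Z %| m)%Z)%:R.
Proof.
have [/dvdzP[z ->]|ndvd] := boolP (q%:Z %| m)%Z.
  under eq_bigr do rewrite e_q_mulq expr1n.
  by rewrite sumr_const card_ord muln1.
have e_q_neq1 : e_q R q m != 1 by apply: contra ndvd => /eqP /e_q_eq1.
have := subrX1 (e_q R q m) q.
rewrite -e_qMn e_q_mulq subrr => /esym /eqP; rewrite mulf_eq0 subr_eq0 (negbTE e_q_neq1) /=.
by move/eqP => ->; rewrite muln0.
Qed.

(* Orthogonality: the sum over [b] factors over the coordinates into geometric sums. *)
Lemma S_qE n (a a' : {ffun 'I_n.+1 -> 'I_q}) (c : 'I_n.+1 -> int) :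
  S_q R a a' c = (\sum_(d < q | coprime d q) \prod_(k < n.+1)
     (q * (q%:Z %| (d%:Z * (a k)%:Z * (a' k)%:Z + c k)%R)%Z)%N)%:R.
Proof.
rewrite natr_sum /S_q; apply: eq_bigr => d _; rewrite natr_prod.
transitivity (\sum_(b : {ffun 'I_n.+1 -> 'I_q})
   \prod_(k < n.+1) e_q R q (d%:Z * (a k)%:Z * (a' k)%:Z + c k) ^+ (b k)).
  apply: eq_bigr => b _.
  rewrite mulr_sumr -big_split /= (big_morph (e_q R q) e_qD e_q0).
  by apply: eq_bigr => k _; rewrite -e_qMn; congr e_q; ring.
rewrite -(bigA_distr_bigA (fun (k : 'I_n.+1) (j : 'I_q) =>
   e_q R q (d%:Z * (a k)%:Z * (a' k)%:Z + c k) ^+ j)) /=.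
by apply: eq_bigr => k _; rewrite sum_e_q_pow.
Qed.

End AdditiveCharacter.

Lemma card_le1_eq_int (q : nat) (z : int) : (#|[pred u : 'I_q | u%:Z == z]| <= 1)%N.
Proof.
apply/card_le1_eqP => u v; rewrite !inE => /eqP uz /eqP vz.
by apply: val_inj; apply/eqP; rewrite -eqz_nat uz vz.
Qed.

Lemma sum_abs_S_le (R : realType) n q (i0 j0 : 'I_n.+1) (x y : int)
    (c : 'I_n.+1 -> int) : (0 < n)%N -> (0 < q)%N ->
  @sum_abs_S R n q i0 j0 x y c <= (q ^ (3 + 2 * n) * ndivisors q ^ n.-1)%:R.
Proof.
move=> n0 q0; rewrite /sum_abs_S.
under eq_bigr do under eq_bigr do rewrite S_qE // normr_nat raddfMn.
under eq_bigr do rewrite -natr_sum.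
rewrite -natr_sum ler_nat (@sum_fixed_coords_congr_le n q i0 j0
  [pred u : 'I_q | u%:Z == (x %% q%:Z)%Z] [pred v : 'I_q | v%:Z == (y %% q%:Z)%Z]) //.
all: exact: card_le1_eq_int.
Qed.

(* Apply [ndivisors_exp_bound] with exponent [k * m], where [eta * m >= 1]. *)
Lemma ndivisors_exp_le_powR (R : realType) (k : nat) (eta : R) : (0 < k)%N -> 0 < eta ->
  exists2 M : R, 0 < M & forall q, (0 < q)%N ->
    (ndivisors q)%:R ^+ k <= M * q%:R `^ eta.
Proof.
move=> k0 eta0; set m := Num.Def.archi_bound eta^-1.
have eta_m : eta^-1 < m%:R by apply: archi_boundP; rewrite invr_ge0 ltW.
have m0 : (0 < m)%N by rewrite -(ltr0n R); apply: lt_trans eta_m; rewrite invr_gt0.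
have eta_m1 : 1 <= eta * m%:R.
  have : eta * eta^-1 <= eta * m%:R by rewrite ler_pM2l // ltW.
  by rewrite mulfV // lt0r_neq0.
set K := (k * m)%N; have K0 : (0 < K)%N by rewrite muln_gt0 k0.
set M := ((K ^ K) ^ (2 ^ K))%N; have M0 : (0 < M)%N by rewrite !expn_gt0 K0.
exists M%:R => [|q q0]; first by rewrite ltr0n.
have q_ge1 : 1 <= q%:R :> R by rewrite ler1n.
have q_ge0 : 0 <= q%:R :> R by apply: le_trans q_ge1.
rewrite -(ler_pXn2r m0) ?nnegrE ?exprn_ge0 ?mulr_ge0 ?powR_ge0 //.
apply: (@le_trans _ _ (M%:R * q%:R)).
  by rewrite -exprM -natrX -natrM ler_nat ndivisors_exp_bound.
rewrite exprMn; apply: ler_pM => //.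
  by rewrite -natrX ler_nat -{1}(expn1 M) leq_pexp2l.
rewrite -powR_mulrn ?powR_ge0 // -powRrM -{1}(powRr1 q_ge0).
exact: ler_powR.
Qed.

Theorem mainTheorem4 (R : realType) :
  forall n : nat, (2 <= n)%N ->
  forall eta : R, 0 < eta ->
  exists C : R, 0 < C /\
    forall (i0 j0 : 'I_n.+1) (x y : int) (c : 'I_n.+1 -> int) (q : nat),
      (1 <= q)%N ->
      @sum_abs_S R n q i0 j0 x y c
        <= C * (q%:R `^ ((3 + 2 * n)%:R + eta)).
Proof.
move=> n n2 eta eta0.
have [M M0 divisor_bound] := ndivisors_exp_le_powR (k := n.-1) (ltac:(lia)) eta0.
exists M; split=> // i0 j0 x y c q q0.
apply: le_trans (sum_abs_S_le R i0 j0 x y c (ltac:(lia)) q0) _.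
rewrite natrM natrX powRD ?pnatr_eq0 -?lt0n ?q0 ?implybT //.
rewrite powR_mulrn // mulrCA ler_wpM2l ?exprn_ge0 // natrX.
exact: divisor_bound.
Qed.
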